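(* Let $\Gamma$ be a $\mathbb Z^d$-periodic graph and $H=\Delta+Q$ with real $\mathbb Z^d$-periodic $Q$ (notation as in the context). Let $\psi\in\ell^2(V_* )$ be an eigenvector with positive components of $H(0)$ corresponding to its smallest eigenvalue $\lambda_1(0)$. Then: (i) for every $f\in\ell^2(V_* )$ and every $\vartheta\in\mathbb T^d$, $$\big\langle (H(\vartheta)-\lambda_1(0)\mathbb 1)\Psi f,\Psi f\big\rangle_{V_*}=\frac12\sum_{\mathbf e=(v,u)\in\mathcal A_*}c_{uv}\,\big|f(v)-e^{i\langle\tau(\mathbf e),\vartheta\rangle}f(u)\big|^2,\qquad c_{uv}=\frac{\psi(u)\psi(v)}{\sqrt{\varkappa_u\varkappa_v}},$$ where $\mathbb 1$ is the identity and $\Psi$ is the operator of multiplication by $\psi$; (ii) for all $\vartheta\in\mathbb T^d$, $$c_0^{-2}\lambda^{(0)}_1(\vartheta)\le\lambda_1(\vartheta)-\lambda_1(0)\le c_0^2\lambda^{(0)}_1(\vartheta),\qquad c_0=\frac{\psi_+}{\psi_-},\ \ \psi_-=\min_{v\in V_*}\frac{\psi(v)}{\sqrt{\varkappa_v}},\ \ \psi_+=\max_{v\in V_*}\frac{\psi(v)}{\sqrt{\varkappa_v}},$$ where $\lambda_1(\vartheta)$ and $\lambda^{(0)}_1(\vartheta)$ are the smallest eigenvalues of $H(\vartheta)$ and $\Delta(\vartheta)$ respectively.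
   Context: A $\mathbb Z^d$-periodic graph is a connected infinite graph $\Gamma=(V,\mathcal E)$, possibly with loops and multiple edges, on which $\mathbb Z^d$ acts freely by graph automorphisms ($v\mapsto v+m$), with finite vertex degrees and finite quotient graph $\Gamma_*=\Gamma/\mathbb Z^d=(V_*,\mathcal E_* )$. Each undirected edge is regarded as two oppositely oriented edges; $\mathcal A$ is the set of oriented edges, $\mathcal A_*=\mathcal A/\mathbb Z^d$. The degree $\varkappa_v$ is the number of oriented edges starting at $v$. $Q:V\to\mathbb R$ with $Q(v+m)=Q(v)$, viewed also as a function on $V_*$. Fix a subtree of $\Gamma$ whose vertex set $V_0$ consists of $\#V_*$ pairwise non-equivalent vertices; each $v\in V$ is uniquely $v=v_0+[v]$ with $v_0\in V_0$, $[v]\in\mathbb Z^d$; the index of $\mathbf e=(u,v)$ is $\tau(\mathbf e)=[v]-[u]$, defined on $\mathcal A_*$ by shift invariance. For $\vartheta\in\mathbb T^d=\mathbb R^d/(2\pi\mathbb Z)^d$: $(\Delta(\vartheta)f)(v)=f(v)-\sum_{\mathbf e=(v,u)\in\mathcal A_*}\frac{e^{i\langle\tau(\mathbf e),\vartheta\rangle}}{\sqrt{\varkappa_v\varkappa_u}}f(u)$ and $H(\vartheta)=\Delta(\vartheta)+Q$ on $\ell^2(V_* )$, inner product $\langle f_1,f_2\rangle_{V_*}=\sum_{v}f_1(v)\overline{f_2(v)}$. *)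

From HB Require Import structures.
From mathcomp Require Import all_boot all_order all_algebra.
From mathcomp Require Import complex.
From mathcomp Require Import all_classical all_reals.
From mathcomp Require Import trigo.
From Stdlib Require Import Relation_Operators.
Set Implicit Arguments. Unset Strict Implicit. Unset Printing Implicit Defensive.
Import Order.TTheory GRing.Theory Num.Theory.
Local Open Scope ring_scope.
Local Open Scope complex_scope.

(* A Z^d-periodic graph Gamma is encoded by its finite quotient Gamma_* :
   vertex set V (= V_* ), oriented-edge set E (= A_* ), source/target maps,
   the orientation reversal rev, and the edge index tau : E -> Z^d.
   Gamma itself is the graph on V * Z^d whose oriented edges are
   ((src e, m), (tgt e, m + tau e)) for e in E, m in Z^d; Z^d acts by shifts
   of the second coordinate (freely).  V * {0} is the fundamental set V_0. *)

Section Defs.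
Variables (R : realType) (d : nat) (V E : finType).
Variables (src tgt : E -> V) (rev : E -> E) (tau : E -> 'rV[int]_d).
Local Notation C := R[i].

(* structural axioms: each undirected edge = two opposite oriented edges *)
Definition quotient_graph_axioms : Prop :=
  (forall e, rev (rev e) = e) /\
  (forall e, rev e <> e) /\
  (forall e, src (rev e) = tgt e) /\
  (forall e, tgt (rev e) = src e) /\
  (forall e, tau (rev e) = - tau e).

Definition gamma_adj (x y : V * 'rV[int]_d) : Prop :=
  exists e, src e = x.1 /\ tgt e = y.1 /\ y.2 = x.2 + tau e.

Definition gamma_connected : Prop :=
  forall x y, clos_refl_trans _ gamma_adj x y.

Definition deg (v : V) : nat := #|[set e | src e == v]|.

Definition pairing (e : E) (theta : 'rV[R]_d) : R :=
  \sum_(k < d) (tau e 0 k)%:~R * theta 0 k.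

Definition expi (x : R) : C := (cos x) +i* (sin x).

Definition sqdeg (v : V) : R := Num.sqrt (deg v)%:R.

Definition Delta (theta : 'rV[R]_d) (f : V -> C) : V -> C := fun v =>
  f v - \sum_(e | src e == v)
          expi (pairing e theta) / ((Num.sqrt ((deg v)%:R * (deg (tgt e))%:R))%:C)
          * f (tgt e).

Definition Hop (Q : V -> R) (theta : 'rV[R]_d) (f : V -> C) : V -> C := fun v =>
  Delta theta f v + (Q v)%:C * f v.

Definition inner (f1 f2 : V -> C) : C := \sum_v f1 v * (f2 v)^*.

Definition is_eigenvector (A : (V -> C) -> (V -> C)) (mu : C) (f : V -> C) : Prop :=
  (exists v, f v != 0) /\ forall v, A f v = mu * f v.

Definition is_eigenvalue (A : (V -> C) -> (V -> C)) (mu : C) : Prop :=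
  exists f, is_eigenvector A mu f.

(* l is the smallest eigenvalue of A: it is an eigenvalue, and every
   eigenvalue mu satisfies l <= mu in the order of C (i.e. mu is real, >= l) *)
Definition is_smallest_eigenvalue (A : (V -> C) -> (V -> C)) (l : R) : Prop :=
  is_eigenvalue A l%:C /\ forall mu, is_eigenvalue A mu -> l%:C <= mu.

Definition mulop (psi : V -> R) (f : V -> C) : V -> C := fun v => (psi v)%:C * f v.

Definition cw (psi : V -> R) (e : E) : R :=
  psi (tgt e) * psi (src e) / Num.sqrt ((deg (tgt e))%:R * (deg (src e))%:R).

Definition psi_minus (psi : V -> R) : R := inf (range (fun v => psi v / sqdeg v)).
Definition psi_plus (psi : V -> R) : R := sup (range (fun v => psi v / sqdeg v)).

End Defs.

From Pilot Require Import Defs.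
From HB Require Import structures.
From mathcomp Require Import all_boot all_order all_algebra.
From mathcomp Require Import complex.
From mathcomp Require Import all_classical all_reals.
From mathcomp Require Import trigo.
From mathcomp Require Import ring.
From Stdlib Require Import Relation_Operators Operators_Properties.
Import Order.TTheory GRing.Theory Num.Theory.
Local Open Scope complex_scope.
Local Open Scope ring_scope.
Set Implicit Arguments. Unset Strict Implicit. Unset Printing Implicit Defensive.

(* Writing g = psi f and using H(0) psi = lambda_1(0) psi, the quadratic form
   of H(theta) - lambda_1(0) at g becomes the weighted edge sum
   1/2 sum_e c_e |f(v) - e^{i<tau(e),theta>} f(u)|^2, each undirected edge
   being seen once from each orientation.  The same computation with Q = 0
   and psi = sqrt(kappa), an eigenvector of Delta(0) for the eigenvalue 0,
   gives the unweighted sum as the form of Delta(theta) at sqrt(kappa) f.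
   Since psi_-^2 <= c_e <= psi_+^2 and psi_- sqrt(kappa) <= psi <= psi_+ sqrt(kappa),
   the two forms and the two norms are comparable; applied to bottom
   eigenvectors, the Rayleigh principle for the Hermitian matrices H(theta)
   and Delta(theta) (a consequence of the spectral theorem) turns these
   comparisons into the two eigenvalue bounds. *)

Lemma sumr_involution_half (K : numFieldType) (T : finType) (r : T -> T)
    (F : T -> K) :
  involutive r -> \sum_t F t = 2^-1 * \sum_t (F t + F (r t)).
Proof.
move=> rK; rewrite big_split /= [X in _ + X](reindex_inj (inv_inj rK)) /=.
under [X in _ + X]eq_bigr do rewrite rK.
by rewrite -mulr2n -[X in _ * X]mulr_natl mulKf // pnatr_eq0.
Qed.

Lemma sumr_delta (K : pzSemiRingType) (T : finType) (F : T -> K) t :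
  \sum_s (t == s)%:R * F s = F t.
Proof.
rewrite (bigD1 t) //= eqxx mul1r big1 ?addr0 // => s /negPf st.
by rewrite eq_sym st mul0r.
Qed.

Lemma clos_refl_trans_first_step (T : Type) (r : T -> T -> Prop) x y :
  clos_refl_trans T r x y -> x <> y -> exists z, r x z.
Proof.
move=> xy; case: (clos_rt_rt1n _ _ _ _ xy) => [/(_ erefl) []|z w rxz _ _]; by exists z.
Qed.

Section FiniteRange.
Variables (R : realType) (T : finType) (r : T -> R) (t0 : T).

Lemma inf_range_arg_min : inf (range r) = r [arg min_(t < t0) r t]%O.
Proof.
case: arg_minP => // tm _ tm_min; apply/eqP; rewrite eq_le; apply/andP; split.
- by apply: ge_inf; [exists (r tm) => _ [t _ <-]; exact: tm_min | exists tm].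
- by apply: lb_le_inf; [exists (r t0), t0 | move=> _ [t _ <-]; exact: tm_min].
Qed.

Lemma sup_range_arg_max : sup (range r) = r [arg max_(t > t0) r t]%O.
Proof.
case: arg_maxP => // tm _ tm_max; apply/eqP; rewrite eq_le; apply/andP; split.
- by apply: ge_sup; [exists (r t0), t0 | move=> _ [t _ <-]; exact: tm_max].
- by apply: ub_le_sup; [exists (r tm) => _ [t _ <-]; exact: tm_max | exists tm].
Qed.

Lemma inf_range_le t : inf (range r) <= r t.
Proof. by rewrite inf_range_arg_min; case: arg_minP => // tm _; apply. Qed.

Lemma le_sup_range t : r t <= sup (range r).
Proof. by rewrite sup_range_arg_max; case: arg_maxP => // tm _; apply. Qed.

End FiniteRange.

Section ComplexExponential.
Variable R : realType.
Local Notation C := R[i].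

Lemma expi0 : expi (0 : R) = 1.
Proof. by rewrite /expi cos0 sin0. Qed.

Lemma conj_expi (x : R) : (expi x)^* = expi (- x).
Proof. by rewrite /expi cosN sinN. Qed.

Lemma expi_mulJ (x : R) : expi x * (expi x)^* = 1.
Proof.
apply/eqP; rewrite eq_complex /= mulrN opprK -!expr2 cos2Dsin2.
by rewrite mulrN [sin x * _]mulrC addNr !eqxx.
Qed.

(* [conjc_real] is stated for [conjc], which [rewrite] does not identify with
   the [Num.conj] used by [inner]. *)
Lemma conj_real_complex (x : R) : (x%:C)^* = x%:C :> C.
Proof. exact: conjc_real. Qed.

Lemma normCK_sub_unit (a b z : C) : z * z^* = 1 ->
  `|a - z * b| ^+ 2 = (a - z * b) * a^* + (b - z^* * a) * b^*.
Proof.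
move=> zJ; rewrite normCK rmorphB rmorphM.
have -> : (b - z^* * a) * b^* = z * z^* * b * b^* - z^* * a * b^*.
  by rewrite zJ; ring.
by ring.
Qed.

End ComplexExponential.

Section InnerProduct.
Variables (R : realType) (V : finType).
Local Notation C := R[i].

Lemma inner_subr (g h k : V -> C) c :
  inner (fun v => g v - c * h v) k = inner g k - c * inner h k.
Proof. by rewrite /inner mulr_sumr -sumrB; apply: eq_bigr => v _; ring. Qed.

Lemma inner_gt0 (g : V -> C) v : g v != 0 -> 0 < inner g g.
Proof.
move=> gv; rewrite /inner (bigD1 v) //=; apply: ltr_pwDl.
  by rewrite lt0r mulf_neq0 ?conjC_eq0 //= mul_conjC_ge0.
by apply: sumr_ge0 => w _; exact: mul_conjC_ge0.
Qed.

Lemma inner_eigenvector A mu (g : V -> C) :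
  is_eigenvector A mu g -> inner (A g) g = mu * inner g g.
Proof.
by move=> [_ Ag]; rewrite /inner mulr_sumr; apply: eq_bigr => v _; rewrite Ag mulrA.
Qed.

Lemma mulop_divK (phi : V -> R) (g : V -> C) : (forall v, 0 < phi v) ->
  mulop phi (fun v => g v / (phi v)%:C) = g.
Proof.
move=> phi_gt0; apply/funext => v; rewrite /mulop mulrC divfK //.
by rewrite -(rmorph0 (real_complex R)) (inj_eq (@complexI _)) gt_eqF.
Qed.

Lemma inner_mulop (phi : V -> R) f :
  inner (mulop phi f) (mulop phi f) = \sum_v (phi v ^+ 2)%:C * (f v * (f v)^*).
Proof.
apply: eq_bigr => v _; rewrite /mulop rmorphM /= conj_real_complex rmorphXn.
by ring.
Qed.

Lemma inner_mulop_le (phi chi : V -> R) (c : R) f :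
  (forall v, 0 <= phi v <= c * chi v) ->
  inner (mulop phi f) (mulop phi f)
  <= (c ^+ 2)%:C * inner (mulop chi f) (mulop chi f).
Proof.
move=> phi_le; rewrite !inner_mulop mulr_sumr; apply: ler_sum => v _.
rewrite [X in _ <= X]mulrA -rmorphM; apply: ler_wpM2r; first exact: mul_conjC_ge0.
have /andP[phi_ge0 phi_le_v] := phi_le v.
by rewrite lecR -exprMn !expr2 ler_pM.
Qed.

Definition Kop (a : V -> V -> C) (f : V -> C) : V -> C :=
  fun v => \sum_w a v w * f w.

Definition hermitian_kernel (a : V -> V -> C) : Prop :=
  forall v w, a w v = (a v w)^*.

Lemma hermitian_eigenbasis a : hermitian_kernel a ->
  exists (u : 'I_#|V| -> V -> C) (D : 'I_#|V| -> C),
  [/\ forall v w, a v w = \sum_k D k * u k v * (u k w)^*,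
      forall k k', inner (u k) (u k') = (k == k')%:R &
      forall v w, \sum_k u k v * (u k w)^* = (v == w)%:R].
Proof.
move=> a_herm.
pose M : 'M[C]_#|V| := \matrix_(i, j) a (enum_val i) (enum_val j).
have M_normal : M \is normalmx.
  have M_herm : map_mx Num.conj M^T = M.
    by apply/matrixP => i j; rewrite !mxE a_herm conjCK.
  by apply/normalmxP; rewrite M_herm.
have P_unitary : spectralmx M \is unitarymx by exact: spectral_unitarymx.
have M_diag := orthomx_spectralP M_normal; rewrite invmx_unitary // in M_diag.
set P := spectralmx M in M_diag P_unitary; set D := spectral_diag M in M_diag.
have PPt : P *m map_mx Num.conj P^T = 1%:M by apply/unitarymxP.
have PtP : map_mx Num.conj P^T *m P = 1%:M.
  by rewrite -invmx_unitary // mulVmx // unitarymx_unit.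
exists (fun k v => (P k (enum_rank v))^*), (fun k => D 0 k); split.
- move=> v w; have := congr1 (fun A : 'M[C]_#|V| => A (enum_rank v) (enum_rank w)) M_diag.
  rewrite /= mxE !enum_rankK => ->; rewrite mxE; apply: eq_bigr => k _.
  by rewrite mul_mx_diag !mxE conjCK; ring.
- move=> k k'; have := congr1 (fun A : 'M[C]_#|V| => A k' k) PPt.
  rewrite !mxE eq_sym => <-; rewrite (reindex (@enum_rank V)) /=.
    by apply: eq_bigr => v _; rewrite !mxE conjCK mulrC.
  exact: onW_bij _ (@enum_rank_bij V).
- move=> v w; have := congr1 (fun A : 'M[C]_#|V| => A (enum_rank v) (enum_rank w)) PtP.
  rewrite !mxE (inj_eq enum_rank_inj) => <-.
  by apply: eq_bigr => k _; rewrite !mxE conjCK.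
Qed.

Lemma inner_Kop_eigenbasis (I : finType) (u : I -> V -> C) (b : I -> C) f :
  inner (Kop (fun v w => \sum_k b k * u k v * (u k w)^*) f) f
  = \sum_k b k * (inner f (u k) * (inner f (u k))^*).
Proof.
have conj_inner k : (inner f (u k))^* = \sum_v (f v)^* * u k v.
  by rewrite rmorph_sum; apply: eq_bigr => v _; rewrite rmorphM /= conjCK.
transitivity (\sum_k \sum_v \sum_w b k * u k v * (u k w)^* * f w * (f v)^*).
  rewrite exchange_big; apply: eq_bigr => v _; rewrite /Kop mulr_suml.
  rewrite exchange_big; apply: eq_bigr => w _; rewrite !mulr_suml.
  by apply: eq_bigr => k _; ring.
apply: eq_bigr => k _; rewrite conj_inner /inner mulr_suml mulr_sumr.
rewrite exchange_big; apply: eq_bigr => w _; rewrite !mulr_sumr.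
by apply: eq_bigr => v _; ring.
Qed.

Lemma rayleigh_principle (A : (V -> C) -> V -> C) a (l : R) :
  hermitian_kernel a -> (forall f v, A f v = Kop a f v) ->
  is_smallest_eigenvalue A l -> forall f, l%:C * inner f f <= inner (A f) f.
Proof.
move=> /hermitian_eigenbasis [u [D [aE u_orth u_compl]]] AE.
have {AE}-> : A = Kop a by apply/funext => g; apply/funext => v; exact: AE.
move=> [_ l_min] f.
have eigen_u k : is_eigenvector (Kop a) (D k) (u k).
  split.
    apply/not_existsP => u0; have := u_orth k k.
    rewrite eqxx /inner big1 => [/eqP|v _]; first by rewrite eq_sym oner_eq0.
    by move/negP/negbNE/eqP: (u0 v) ->; rewrite mul0r.
  move=> v; transitivity (\sum_j D j * u j v * inner (u k) (u j)).
    rewrite /Kop; under eq_bigr do rewrite aE mulr_suml.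
    rewrite exchange_big; apply: eq_bigr => j _; rewrite /inner mulr_sumr.
    by apply: eq_bigr => w _; ring.
  rewrite (bigD1 k) //= u_orth eqxx mulr1 big1 ?addr0 // => j /negPf jk.
  by rewrite u_orth eq_sym jk mulr0.
have -> : a = fun v w => \sum_k D k * u k v * (u k w)^*.
  by apply/funext => v; apply/funext => w; exact: aE.
(* Parseval: by completeness of [u], the identity kernel is [\sum_k u k v * (u k w)^*]. *)
have f_Kop1 : f = Kop (fun v w => \sum_k 1 * u k v * (u k w)^*) f.
  apply/funext => v; rewrite /Kop.
  under eq_bigr do under eq_bigr do rewrite mul1r.
  under eq_bigr do rewrite u_compl.
  by rewrite sumr_delta.
rewrite inner_Kop_eigenbasis {1}f_Kop1 inner_Kop_eigenbasis mulr_sumr.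
apply: ler_sum => k _; rewrite mul1r; apply: ler_wpM2r; first exact: mul_conjC_ge0.
by apply: l_min; exists (u k).
Qed.

End InnerProduct.

Section PeriodicGraph.
Variables (R : realType) (d : nat) (V E : finType).
Variables (src tgt : E -> V) (rev : E -> E) (tau : E -> 'rV[int]_d).
Hypothesis graph : quotient_graph_axioms src tgt rev tau.
Local Notation C := R[i].
Local Notation deg := (deg src).
Local Notation sqdeg := (sqdeg R src).
Local Notation Delta := (Delta src tgt tau).
Local Notation Hop := (Hop src tgt tau).
Local Notation phase theta e := (@expi R (pairing tau e theta)).

Let revK : involutive rev. Proof. by case: graph. Qed.
Let src_rev e : src (rev e) = tgt e. Proof. by case: graph => _ [_ []]. Qed.
Let tgt_rev e : tgt (rev e) = src e. Proof. by case: graph => _ [_ [_ []]]. Qed.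

Lemma pairing0 e : pairing tau e (0 : 'rV[R]_d) = 0.
Proof. by rewrite /pairing big1 // => k _; rewrite mxE mulr0. Qed.

Lemma phase_rev theta e : phase theta (rev e) = (phase theta e)^*.
Proof.
case: graph => _ [_ [_ [_ tau_rev]]].
rewrite conj_expi /pairing tau_rev -sumrN; congr expi; apply: eq_bigr => k _.
by rewrite mxE intrN mulNr.
Qed.

Lemma cw_rev (psi : V -> R) e : cw src tgt psi (rev e) = cw src tgt psi e.
Proof. by rewrite /cw src_rev tgt_rev [psi _ * _]mulrC [_%:R * _]mulrC. Qed.

Lemma Hop_sub_mulop (Q psi : V -> R) (lam : R) theta f v :
  (forall v, Hop Q 0 (fun v => (psi v)%:C) v = lam%:C * (psi v)%:C) ->
  Hop Q theta (mulop psi f) v - lam%:C * mulop psi f v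
  = \sum_(e | src e == v)
      (psi (tgt e) / Num.sqrt ((deg (src e))%:R * (deg (tgt e))%:R))%:C
      * (f v - phase theta e * f (tgt e)).
Proof.
move=> /(_ v); rewrite /Hop /Delta /mulop.
under eq_bigr do rewrite pairing0 expi0.
set S := \sum_(e | _) _ => psi_eigen.
have QE : (Q v)%:C * (psi v)%:C = lam%:C * (psi v)%:C - (psi v)%:C + S.
  by rewrite -psi_eigen; ring.
rewrite mulrA QE.
transitivity (S * f v - \sum_(e | src e == v) phase theta e
    / (Num.sqrt ((deg v)%:R * (deg (tgt e))%:R))%:C * ((psi (tgt e))%:C * f (tgt e))).
  by ring.
rewrite /S mulr_suml -sumrB; apply: eq_bigr => e /eqP <-.
by rewrite rmorphM fmorphV; ring.
Qed.

Lemma Hop_ground_state_form (Q psi : V -> R) (lam : R) theta f :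
  (forall v, Hop Q 0 (fun v => (psi v)%:C) v = lam%:C * (psi v)%:C) ->
  inner (fun v => Hop Q theta (mulop psi f) v - lam%:C * mulop psi f v)
        (mulop psi f)
  = 2^-1 * \sum_e (cw src tgt psi e)%:C
                  * `|f (src e) - phase theta e * f (tgt e)| ^+ 2.
Proof.
move=> psi_eigen.
pose F e := (cw src tgt psi e)%:C
            * ((f (src e) - phase theta e * f (tgt e)) * (f (src e))^*).
transitivity (\sum_e F e).
  rewrite /inner (partition_big src predT) //=; apply: eq_bigr => v _.
  rewrite Hop_sub_mulop // mulr_suml; apply: eq_bigr => e /eqP <-.
  rewrite /F /cw /mulop !rmorphM /= !conj_real_complex.
  by rewrite [(deg (tgt e))%:R * _]mulrC !fmorphV; ring.
rewrite (sumr_involution_half _ revK); congr (_ * _); apply: eq_bigr => e _.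
by rewrite /F cw_rev src_rev tgt_rev phase_rev (normCK_sub_unit _ _ (expi_mulJ _)); ring.
Qed.

Definition hop_kernel (Q : V -> R) theta (v w : V) : C :=
  (v == w)%:R * (1 + (Q v)%:C)
  - \sum_(e | (src e == v) && (tgt e == w))
      phase theta e / (Num.sqrt ((deg v)%:R * (deg w)%:R))%:C.

Lemma Hop_kernelE (Q : V -> R) theta f v :
  Hop Q theta f v = Kop (hop_kernel Q theta) f v.
Proof.
rewrite /Kop /Hop /Delta; under [RHS]eq_bigr do rewrite mulrBl -mulrA.
rewrite sumrB sumr_delta.
rewrite (partition_big tgt predT) //=.
under [X in _ - X + _]eq_bigr => w _.
  rewrite (eq_bigr (fun e => phase theta e
      / (Num.sqrt ((deg v)%:R * (deg w)%:R))%:C * f w)); last first.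
    by move=> e /andP[_ /eqP ->].
  rewrite -mulr_suml; over.
by ring.
Qed.

Lemma Hop0 (theta : 'rV[R]_d) : Hop (fun=> 0) theta = Delta theta.
Proof. by apply/funext => f; apply/funext => v; rewrite /Hop mul0r addr0. Qed.

Lemma hop_kernel_hermitian (Q : V -> R) theta :
  hermitian_kernel (hop_kernel Q theta).
Proof.
move=> v w; rewrite /hop_kernel rmorphB rmorph_sum /=; congr (_ - _).
  rewrite eq_sym; case: eqP => [->|_]; last by rewrite !mul0r rmorph0.
  by rewrite !mul1r rmorphD rmorph1 /= conj_real_complex.
rewrite (reindex_inj (inv_inj revK)) /=; apply: eq_big => [e|e _].
  by rewrite src_rev tgt_rev andbC.
by rewrite phase_rev rmorphM fmorphV /= conj_real_complex [(deg w)%:R * _]mulrC.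
Qed.

Lemma deg_gt0 : (0 < d)%N -> gamma_connected src tgt tau -> forall v, (0 < deg v)%N.
Proof.
move=> d_gt0 connected v.
have shifted : ((v, 0) : V * 'rV[int]_d) <> (v, const_mx 1).
  by move=> [] /matrixP /(_ 0 (Ordinal d_gt0)) /eqP; rewrite !mxE eq_sym oner_eq0.
have [_ [e [src_e _]]] := clos_refl_trans_first_step (connected _ _) shifted.
by apply/card_gt0P; exists e; rewrite inE src_e.
Qed.

Lemma Hop_rayleigh (Q : V -> R) theta (l : R) :
  is_smallest_eigenvalue (Hop Q theta) l ->
  forall g, l%:C * inner g g <= inner (Hop Q theta g) g.
Proof. exact: rayleigh_principle (hop_kernel_hermitian Q theta) (Hop_kernelE Q theta). Qed.

Lemma Delta_rayleigh theta (l : R) :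
  is_smallest_eigenvalue (Delta theta) l ->
  forall g, l%:C * inner g g <= inner (Delta theta g) g.
Proof. by rewrite -Hop0; exact: Hop_rayleigh. Qed.

Section PositiveDegrees.
Hypothesis deg_pos : forall v, (0 < deg v)%N.

Let sqdeg_gt0 v : 0 < sqdeg v.
Proof. by rewrite sqrtr_gt0 ltr0n. Qed.

Lemma sqdeg_eigen v :
  Hop (fun=> 0) 0 (fun v => (sqdeg v)%:C) v = (0 : R)%:C * (sqdeg v)%:C.
Proof.
rewrite Hop0 /Delta mul0r.
have term e : src e == v ->
    phase 0 e / (Num.sqrt ((deg v)%:R * (deg (tgt e))%:R))%:C * (sqdeg (tgt e))%:C
    = ((sqdeg v)^-1)%:C.
  move=> _; rewrite pairing0 expi0 mul1r sqrtrM ?ler0n // -!fmorphV -!rmorphM /=.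
  by rewrite invfM -mulrA mulVf ?mulr1 // (gt_eqF (sqdeg_gt0 _)).
rewrite (eq_bigr _ term).
have -> : \sum_(e | src e == v) ((sqdeg v)^-1)%:C = ((sqdeg v)^-1)%:C *+ deg v.
  by rewrite /deg -sumr_const; apply: eq_bigl => e; rewrite inE.
have deg_sqr : (deg v)%:R = sqdeg v ^+ 2 :> R by rewrite sqr_sqrtr ?ler0n.
by rewrite -rmorphMn -rmorphB -mulr_natr deg_sqr expr2 mulKf ?subrr ?gt_eqF.
Qed.

Lemma cw_sqdeg e : cw src tgt sqdeg e = 1.
Proof.
rewrite /cw /Defs.sqdeg -sqrtrM ?ler0n // mulfV // gt_eqF //.
by rewrite sqrtr_gt0 mulr_gt0 ?ltr0n.
Qed.

Lemma Delta_form theta f :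
  inner (Delta theta (mulop sqdeg f)) (mulop sqdeg f)
  = 2^-1 * \sum_e `|f (src e) - phase theta e * f (tgt e)| ^+ 2.
Proof.
have := Hop_ground_state_form theta f sqdeg_eigen.
rewrite inner_subr Hop0 mul0r subr0 => ->; congr (_ * _).
by apply: eq_bigr => e _; rewrite cw_sqdeg mul1r.
Qed.

Lemma Delta_form_ge0 (theta : 'rV[R]_d) (g : V -> C) : 0 <= inner (Delta theta g) g.
Proof.
rewrite -(mulop_divK g sqdeg_gt0) Delta_form mulr_ge0 ?invr_ge0 ?ler0n //.
by apply: sumr_ge0 => e _; exact: exprn_ge0.
Qed.

Lemma Delta_eigenvalue_ge0 theta (mu : R) :
  is_eigenvalue (Delta theta) mu%:C -> 0 <= mu.
Proof.
move=> [h h_eigen]; have [[v hv] _] := h_eigen.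
have := Delta_form_ge0 theta h; rewrite (inner_eigenvector h_eigen).
by rewrite pmulr_lge0 ?ler0c // (inner_gt0 hv).
Qed.

Section Comparison.
Variables (Q psi : V -> R) (lam10 : R).
Hypothesis psi_gt0 : forall v, 0 < psi v.
Hypothesis psi_eigen :
  forall v, Hop Q 0 (fun v => (psi v)%:C) v = lam10%:C * (psi v)%:C.
Local Notation pm := (psi_minus src psi).
Local Notation pp := (psi_plus src psi).

Lemma psi_minus_le v : pm <= psi v / sqdeg v.
Proof. exact: inf_range_le. Qed.

Lemma le_psi_plus v : psi v / sqdeg v <= pp.
Proof. exact: le_sup_range. Qed.

Lemma psi_minus_gt0 (v0 : V) : 0 < pm.
Proof. by rewrite /psi_minus (inf_range_arg_min _ v0) divr_gt0. Qed.

Lemma cw_bounds e : pm ^+ 2 <= cw src tgt psi e <= pp ^+ 2.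
Proof.
have pm_gt0 := psi_minus_gt0 (src e).
have -> : cw src tgt psi e = psi (tgt e) / sqdeg (tgt e) * (psi (src e) / sqdeg (src e)).
  by rewrite /cw sqrtrM ?ler0n // invfM; ring.
rewrite !expr2; apply/andP; split; apply: ler_pM => //;
  by [exact: ltW | exact: psi_minus_le | exact: le_psi_plus | rewrite ltW ?divr_gt0].
Qed.

Lemma psi_le_psi_plus v : 0 <= psi v <= pp * sqdeg v.
Proof. by rewrite ltW // -ler_pdivrMr ?le_psi_plus. Qed.

Lemma sqdeg_le_psi_minus v : 0 <= sqdeg v <= pm^-1 * psi v.
Proof.
by rewrite ltW // mulrC ler_pdivlMr ?(psi_minus_gt0 v) // mulrC -ler_pdivlMr ?psi_minus_le.
Qed.

Lemma form_bounds theta f :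
  (pm ^+ 2)%:C * inner (Delta theta (mulop sqdeg f)) (mulop sqdeg f)
  <= inner (Hop Q theta (mulop psi f)) (mulop psi f)
     - lam10%:C * inner (mulop psi f) (mulop psi f)
  <= (pp ^+ 2)%:C * inner (Delta theta (mulop sqdeg f)) (mulop sqdeg f).
Proof.
rewrite -inner_subr (Hop_ground_state_form _ _ psi_eigen) Delta_form.
apply/andP; split; rewrite mulrCA; (apply: ler_wpM2l; first by rewrite invr_ge0 ler0n);
  rewrite mulr_sumr; apply: ler_sum => e _;
  (apply: ler_wpM2r; first exact: exprn_ge0);
  by rewrite lecR; case/andP: (cw_bounds e).
Qed.

Lemma psi_plus_gt0 (v0 : V) : 0 < pp.
Proof.
exact: lt_le_trans (psi_minus_gt0 v0) (le_trans (psi_minus_le v0) (le_psi_plus v0)).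
Qed.

Lemma eigenvalue_shift_ge theta (lam1 lam01 : R) :
  is_smallest_eigenvalue (Hop Q theta) lam1 ->
  is_smallest_eigenvalue (Delta theta) lam01 ->
  (pp / pm) ^- 2 * lam01 <= lam1 - lam10.
Proof.
move=> [[g g_eigen] _] Delta_bottom; have [[v0 gv0] _] := g_eigen.
have pm_gt0 := psi_minus_gt0 v0; have pp_gt0 := psi_plus_gt0 v0.
have lam01_ge0 := Delta_eigenvalue_ge0 Delta_bottom.1.
pose f v := g v / (psi v)%:C; have psi_f : mulop psi f = g := mulop_divK g psi_gt0.
rewrite -lecR -(ler_pM2r (inner_gt0 gv0)) rmorphB mulrBl /=.
rewrite -(inner_eigenvector g_eigen) -psi_f.
have pm2_ge0 : 0 <= (pm ^+ 2)%:C :> C by rewrite ler0c exprn_ge0 ?ltW.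
have c_ge0 : 0 <= ((pp / pm) ^- 2 * lam01)%:C :> C.
  by rewrite ler0c mulr_ge0 // invr_ge0 exprn_ge0 // divr_ge0 // ltW.
apply: le_trans (andP (form_bounds theta f)).1.
apply: le_trans (ler_wpM2l pm2_ge0 (Delta_rayleigh Delta_bottom _)).
apply: le_trans (ler_wpM2l c_ge0 (inner_mulop_le f psi_le_psi_plus)) _.
have shift : (pp / pm) ^- 2 * lam01 * pp ^+ 2 = pm ^+ 2 * lam01.
  by field; rewrite !gt_eqF.
by rewrite mulrA -rmorphM /= shift rmorphM mulrA.
Qed.

Lemma eigenvalue_shift_le theta (lam1 lam01 : R) :
  is_smallest_eigenvalue (Hop Q theta) lam1 ->
  is_smallest_eigenvalue (Delta theta) lam01 ->
  lam1 - lam10 <= (pp / pm) ^+ 2 * lam01.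
Proof.
move=> Hop_bottom [[h h_eigen] _]; have [[v0 hv0] _] := h_eigen.
have pm_gt0 := psi_minus_gt0 v0; have pp_gt0 := psi_plus_gt0 v0.
have lam01_ge0 : 0 <= lam01 := Delta_eigenvalue_ge0 (ex_intro _ h h_eigen).
pose f v := h v / (sqdeg v)%:C.
have sqdeg_f : mulop sqdeg f = h by apply: mulop_divK; exact: sqdeg_gt0.
have h_le := inner_mulop_le f sqdeg_le_psi_minus; rewrite sqdeg_f in h_le.
have g_gt0 : 0 < inner (mulop psi f) (mulop psi f).
  have := lt_le_trans (inner_gt0 hv0) h_le.
  by rewrite pmulr_rgt0 // ltcR exprn_gt0 ?invr_gt0.
rewrite -lecR -(ler_pM2r g_gt0) rmorphB mulrBl /=.
apply: le_trans (lerD (Hop_rayleigh Hop_bottom _) (lexx _)) _.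
apply: le_trans (andP (form_bounds theta f)).2 _.
rewrite sqdeg_f (inner_eigenvector h_eigen).
have pp2_ge0 : 0 <= (pp ^+ 2)%:C :> C by rewrite ler0c exprn_ge0 ?ltW.
have lam01C_ge0 : 0 <= lam01%:C :> C by rewrite ler0c.
apply: le_trans (ler_wpM2l pp2_ge0 (ler_wpM2l lam01C_ge0 h_le)) _.
have shift : pp ^+ 2 * (lam01 * pm^-1 ^+ 2) = (pp / pm) ^+ 2 * lam01.
  by field; rewrite gt_eqF.
by rewrite 2!mulrA -!rmorphM /= -mulrA shift.
Qed.

End Comparison.

End PositiveDegrees.

End PeriodicGraph.

Theorem lemma4p2 (R : realType) (d : nat) (V E : finType)
  (src tgt : E -> V) (rev : E -> E) (tau : E -> 'rV[int]_d)
  (Q : V -> R) (psi : V -> R) (lam10 : R) :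
  (0 < d)%N ->
  quotient_graph_axioms src tgt rev tau ->
  gamma_connected src tgt tau ->
  (forall v, 0 < psi v) ->
  is_eigenvector (Hop src tgt tau Q 0) lam10%:C (fun v => (psi v)%:C) ->
  is_smallest_eigenvalue (Hop src tgt tau Q 0) lam10 ->
  (forall (f : V -> R[i]) (theta : 'rV[R]_d),
     inner (fun v => Hop src tgt tau Q theta (mulop psi f) v
                       - lam10%:C * mulop psi f v)
           (mulop psi f)
     = 2^-1 * \sum_(e : E) (cw src tgt psi e)%:C *
              `| f (src e) - expi (pairing tau e theta) * f (tgt e) | ^+ 2) /\
  (forall (theta : 'rV[R]_d) (lam1 lam01 : R),
     is_smallest_eigenvalue (Hop src tgt tau Q theta) lam1 ->
     is_smallest_eigenvalue (Delta src tgt tau theta) lam01 ->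
     let c0 := psi_plus src psi / psi_minus src psi in
     c0 ^- 2 * lam01 <= lam1 - lam10 <= c0 ^+ 2 * lam01).
Proof.
move=> d_gt0 graph connected psi_gt0 [_ psi_eigen] _.
split=> [f theta|theta lam1 lam01 Hop_bottom Delta_bottom /=].
  exact: (Hop_ground_state_form graph theta f psi_eigen).
have deg_pos := deg_gt0 d_gt0 connected.
by rewrite (eigenvalue_shift_ge graph deg_pos psi_gt0 psi_eigen Hop_bottom Delta_bottom)
  (eigenvalue_shift_le graph deg_pos psi_gt0 psi_eigen Hop_bottom Delta_bottom).
Qed.
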